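(* Let $n\geq 2$, $G=\mathbb{Z}_n\times\mathbb{Z}_n$, and $\beta$ a bicharacter of $G$. Let $A$ be a $G$-graded $\beta$-commutative algebra with $A_0=K$ such that, for an enumeration $g_1,\dots,g_k$ of the nonzero elements of $G$, there exist $a_j\in A_{g_j}$ with $a_1\cdots a_k\neq0$. Then $A$ is isomorphic, as a $G$-graded algebra, to a twisted group algebra $K^\alpha G$.
   Context: All algebras are associative with unit over an algebraically closed field $K$ of characteristic $0$. A bicharacter of an abelian group $G$ is a map $\beta\colon G\times G\to K^*$ with $\beta(g,h)=\beta(h,g)^{-1}$, multiplicative in each argument. A $G$-graded algebra $C$ is $\beta$-commutative if $c_gc_h=\beta(g,h)c_hc_g$ for all homogeneous $c_g\in C_g$, $c_h\in C_h$. For a 2-cocycle $\alpha\colon G\times G\to K^*$, the twisted group algebra $K^\alpha G$ has basis $\{X_g\}_{g\in G}$ with $X_gX_h=\alpha(g,h)X_{g+h}$ and grading $(K^\alpha G)_g=KX_g$. *)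

From HB Require Import structures.
From mathcomp Require Import all_boot all_order all_algebra.
Set Implicit Arguments. Unset Strict Implicit. Unset Printing Implicit Defensive.
Import GRing.Theory.
Local Open Scope ring_scope.

Section Defs.
Variables (K : fieldType) (G : finZmodType).

(** comp g is the homogeneous component A_g; A = (+)_g A_g and A_g A_h <= A_(g+h). *)
Definition graded_algebra (A : algType K) (comp : G -> {pred A}) : Prop :=
  [/\ (forall g, 0 \in comp g /\
         (forall (c : K) (x y : A), x \in comp g -> y \in comp g -> c *: x + y \in comp g)),
      (forall a : A, exists x : G -> A, (forall g, x g \in comp g) /\ a = \sum_(g : G) x g),
      (forall x : G -> A, (forall g, x g \in comp g) -> \sum_(g : G) x g = 0 ->
          forall g, x g = 0) &
      (forall g h (x y : A), x \in comp g -> y \in comp h -> x * y \in comp (g + h))].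

Definition bicharacter (beta : G -> G -> K) : Prop :=
  [/\ forall g h, beta g h != 0,
      forall g h, beta g h = (beta h g)^-1,
      forall g g' h, beta (g + g') h = beta g h * beta g' h &
      forall g h h', beta g (h + h') = beta g h * beta g h'].

Definition beta_commutative (A : algType K) (comp : G -> {pred A}) (beta : G -> G -> K) :=
  forall g h (x y : A), x \in comp g -> y \in comp h -> x * y = beta g h *: (y * x).

Definition cocycle (alpha : G -> G -> K) : Prop :=
  (forall g h, alpha g h != 0) /\
  (forall g h k, alpha g h * alpha (g + h) k = alpha h k * alpha g (h + k)).

(** Twisted group algebra K^alpha G: underlying space {ffun G -> K},
    basis X_g = indicator of g, the product is
    the bilinear extension of X_g X_h = alpha g h X_(g+h). *)
Definition tw_mul (alpha : G -> G -> K) (x y : {ffun G -> K}) : {ffun G -> K} :=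
  [ffun k => \sum_(g : G) \sum_(h : G)
               (if g + h == k then alpha g h * x g * y h else 0)].

Definition tw_one (alpha : G -> G -> K) : {ffun G -> K} :=
  [ffun k => if k == 0 then (alpha 0 0)^-1 else 0].

Definition tw_lin (c : K) (x y : {ffun G -> K}) : {ffun G -> K} :=
  [ffun k => c * x k + y k].

Definition tw_comp (g : G) : {pred {ffun G -> K}} :=
  fun x => [forall h, (h != g) ==> (x h == 0)].

Definition graded_iso (alpha : G -> G -> K) (A : algType K) (comp : G -> {pred A})
    (f : {ffun G -> K} -> A) : Prop :=
  [/\ forall (c : K) x y, f (tw_lin c x y) = c *: f x + f y,
      bijective f,
      forall x y, f (tw_mul alpha x y) = f x * f y,
      f (tw_one alpha) = 1 &
      forall g, (forall x, x \in tw_comp g -> f x \in comp g) /\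
                (forall a, a \in comp g -> exists2 x, x \in tw_comp g & f x = a)].

End Defs.

Definition ZnZn (n : nat) : Type := ('Z_n * 'Z_n)%type.
HB.instance Definition _ n := GRing.Zmodule.on (ZnZn n).
HB.instance Definition _ n := Finite.on (ZnZn n).

(* The product a of the a_g is homogeneous of degree the sum of all elements of
   Z_n x Z_n, which is 0 because every element of Z_n is killed by n; so a is a
   nonzero scalar.  Writing a = X a_g Y and rotating the factors cyclically by
   beta-commutativity shows that a_g (Y X) and (Y X) a_g are nonzero scalars, so
   every a_g is a homogeneous unit.  A graded algebra with A_0 = K and a
   homogeneous unit b_g in every component has A_g = K b_g, and
   b_g b_h = alpha(g, h) b_(g+h) defines the cocycle of the twisted group algebra. *)

From HB Require Import structures.
From mathcomp Require Import all_boot all_order all_algebra fingroup cyclic.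
Set Implicit Arguments. Unset Strict Implicit. Unset Printing Implicit Defensive.
Import GRing.Theory FinRing.Theory.
Local Open Scope ring_scope.

Lemma scalerIl (K : fieldType) (V : lmodType K) (v : V) :
  v != 0 -> injective ( *:%R^~ v).
Proof.
move=> v_neq0 c d /eqP; rewrite -subr_eq0 -scalerBl scaler_eq0 (negbTE v_neq0).
by rewrite orbF subr_eq0 => /eqP.
Qed.

Lemma mulr_alg_inverse (K : fieldType) (A : algType K) (x u : A) (c d : K) :
  c != 0 -> x * u = c%:A -> u * x = d%:A ->
  x * (c^-1 *: u) = 1 /\ (c^-1 *: u) * x = 1.
Proof.
move=> c_neq0 xu ux.
have u_neq0 : u != 0.
  apply: contra_neq (oner_neq0 A) => u0.
  by apply: (scalerI c_neq0); rewrite -xu u0 mulr0 scaler0.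
have cd : c = d by apply: (scalerIl u_neq0); rewrite -mulr_algr -xu mulrA ux mulr_algl.
by rewrite -scalerAr xu -scalerAl ux -cd scalerA mulVf // scale1r.
Qed.

Lemma mulrn_card (G : finZmodType) (x : G) : x *+ #|G| = 0.
Proof. by rewrite -zmodXgE -cardsT expg_cardG ?inE. Qed.

Lemma sumr_pairs (G : finZmodType) : \sum_(p : G * G) p = 0.
Proof.
have sum_pair (F : G * G -> G * G) : \sum_p F p = (\sum_p (F p).1, \sum_p (F p).2).
  by elim/big_rec3: _ => // i y1 y2 y3 _ ->.
have sum_const (F : G -> G) : \sum_x \sum_(y : G) F x = 0.
  by rewrite big1 // => x _; rewrite sumr_const mulrn_card.
rewrite sum_pair -(pair_bigA _ (fun x _ => x)) -(pair_bigA _ (fun _ y => y)) /=.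
by rewrite sum_const exchange_big sum_const.
Qed.

Section GradedAlgebra.
Variables (K : fieldType) (G : finZmodType) (A : algType K) (comp : G -> {pred A}).
Hypothesis comp_graded : graded_algebra comp.
Hypothesis comp0P : forall x : A, x \in comp 0 <-> exists c : K, x = c%:A.

Lemma comp0_1 : (1 : A) \in comp 0.
Proof. by apply/comp0P; exists 1; rewrite scale1r. Qed.

Lemma compZ g (c : K) x : x \in comp g -> c *: x \in comp g.
Proof.
move=> xg; have [/(_ g) [comp_0 compDZ] _ _ _] := comp_graded.
by rewrite -[c *: x]addr0 compDZ.
Qed.

Lemma compM g h x y : x \in comp g -> y \in comp h -> x * y \in comp (g + h).
Proof. by have [_ _ _] := comp_graded; apply. Qed.

Lemma comp_prod (a : G -> A) (r : seq G) :
  (forall g, a g \in comp g) -> \prod_(h <- r) a h \in comp (\sum_(h <- r) h).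
Proof.
move=> a_comp; elim: r => [|h r IHr]; first by rewrite !big_nil comp0_1.
by rewrite !big_cons compM.
Qed.

Section HomogeneousUnits.
Variable b : G -> A.
Hypothesis b_comp : forall g, b g \in comp g.
Hypothesis b_unit :
  forall g, exists2 v, v \in comp (- g) & b g * v = 1 /\ v * b g = 1.

Lemma unit_comp_neq0 g : b g != 0.
Proof.
have [v _ [bv _]] := b_unit g.
by apply: contra_eq_neq bv => ->; rewrite mul0r eq_sym oner_neq0.
Qed.

Lemma comp_unit_line g x : x \in comp g -> exists c, x == c *: b g.
Proof.
move=> xg; have [v vg [_ vb]] := b_unit g.
have /comp0P [c xv] : x * v \in comp 0 by rewrite -(subrr g) compM.
by exists c; rewrite -[x]mulr1 -vb mulrA xv mulr_algl.
Qed.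

Definition unit_twist g h : K := xchoose (comp_unit_line (compM (b_comp g) (b_comp h))).

Lemma mul_unit_twist g h : b g * b h = unit_twist g h *: b (g + h).
Proof. exact/eqP/(xchooseP (comp_unit_line (compM (b_comp g) (b_comp h)))). Qed.

Lemma unit_twist_cocycle : cocycle unit_twist.
Proof.
split=> [g h | g h k].
  have [v _ [bv _]] := b_unit h.
  apply: contra_neq (unit_comp_neq0 g) => twist0.
  by rewrite -[b g]mulr1 -bv mulrA mul_unit_twist twist0 scale0r mul0r.
apply: (scalerIl (unit_comp_neq0 (g + h + k))).
rewrite -!scalerA -mul_unit_twist scalerAl -mul_unit_twist.
by rewrite -addrA -mul_unit_twist scalerAr -mul_unit_twist mulrA.
Qed.

(* b 0 need not be 1: invertibility of b 0 turns b 0 * b 0 = alpha 0 0 *: b 0 into this. *)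
Lemma unit0_alg : b 0 = (unit_twist 0 0)%:A.
Proof.
have [v _ [b0v _]] := b_unit 0.
by rewrite -[b 0]mulr1 -b0v mulrA mul_unit_twist addr0 -scalerAl b0v.
Qed.

Definition unit_basis_map (x : {ffun G -> K}) : A := \sum_g x g *: b g.

Lemma unit_basis_map_comp g x : x \in tw_comp g -> unit_basis_map x = x g *: b g.
Proof.
move=> /forallP xg; rewrite /unit_basis_map (bigD1 g) //= big1 ?addr0 // => h hg.
by move/implyP: (xg h) => /(_ hg) /eqP ->; rewrite scale0r.
Qed.

Lemma unit_basis_map_lin c x y :
  unit_basis_map (tw_lin c x y) = c *: unit_basis_map x + unit_basis_map y.
Proof.
rewrite /unit_basis_map scaler_sumr -big_split; apply: eq_bigr => g _.
by rewrite ffunE scalerDl scalerA.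
Qed.

Lemma unit_basis_map_inj : injective unit_basis_map.
Proof.
move=> x y xy; apply/ffunP => g; apply/eqP; rewrite -subr_eq0.
have [_ _ comp_direct _] := comp_graded.
have sum0 : \sum_h (x h - y h) *: b h = 0.
  by rewrite (eq_bigr _ (fun h _ => scalerBl _ _ _)) sumrB -/(unit_basis_map x) xy subrr.
have /(_ sum0 g) /eqP := comp_direct _ (fun h => compZ (x h - y h) (b_comp h)).
by rewrite scaler_eq0 (negbTE (unit_comp_neq0 g)) orbF.
Qed.

Lemma unit_basis_map_surj a : exists x, unit_basis_map x == a.
Proof.
have [_ /(_ a) [y [y_comp ->]] _ _] := comp_graded.
exists [ffun g => xchoose (comp_unit_line (y_comp g))]; apply/eqP.
apply: eq_bigr => g _; rewrite ffunE.
exact/esym/eqP/(xchooseP (comp_unit_line (y_comp g))).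
Qed.

Lemma unit_basis_map_mul x y :
  unit_basis_map (tw_mul unit_twist x y) = unit_basis_map x * unit_basis_map y.
Proof.
rewrite /unit_basis_map mulr_suml.
under eq_bigr => k _ do rewrite ffunE scaler_suml.
under eq_bigr => k _ do under eq_bigr => g _ do rewrite scaler_suml.
rewrite exchange_big /=; apply: eq_bigr => g _.
rewrite exchange_big /= mulr_sumr; apply: eq_bigr => h _.
rewrite (eq_bigr (fun k => if k == g + h then (unit_twist g h * x g * y h) *: b k else 0)).
  rewrite -big_mkcond big_pred1_eq -scalerAl -scalerAr scalerA mul_unit_twist scalerA.
  by congr (_ *: _); rewrite [RHS]mulrC mulrA.
by move=> k _; rewrite eq_sym; case: eqP => // _; rewrite scale0r.
Qed.

Lemma unit_basis_map_one : unit_basis_map (tw_one unit_twist) = 1.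
Proof.
have one0 : tw_one unit_twist \in tw_comp 0.
  by apply/forallP => h; apply/implyP => /negbTE h0; rewrite ffunE h0.
have [twist00_neq0 _] := unit_twist_cocycle.
by rewrite (unit_basis_map_comp one0) ffunE eqxx unit0_alg scalerA mulVf ?scale1r.
Qed.

Lemma unit_basis_map_graded g :
  (forall x, x \in tw_comp g -> unit_basis_map x \in comp g) /\
  (forall a, a \in comp g -> exists2 x, x \in tw_comp g & unit_basis_map x = a).
Proof.
split=> [x xg | a /(comp_unit_line) [c /eqP ->]].
  by rewrite (unit_basis_map_comp xg) compZ.
have xg : [ffun h => if h == g then c else 0] \in tw_comp g.
  by apply/forallP => h; apply/implyP => /negbTE hg; rewrite ffunE hg.
by exists [ffun h => if h == g then c else 0]; rewrite // (unit_basis_map_comp xg) ffunE eqxx.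
Qed.

Lemma unit_basis_map_graded_iso : graded_iso unit_twist comp unit_basis_map.
Proof.
split; [exact: unit_basis_map_lin | | exact: unit_basis_map_mul
       | exact: unit_basis_map_one | exact: unit_basis_map_graded].
exists (fun a => xchoose (unit_basis_map_surj a)) => [x | a].
  by apply: unit_basis_map_inj; apply/eqP/(xchooseP (unit_basis_map_surj _)).
exact/eqP/(xchooseP (unit_basis_map_surj a)).
Qed.

End HomogeneousUnits.

Theorem twisted_group_algebra_of_units (b : G -> A) :
  (forall g, b g \in comp g) ->
  (forall g, exists2 v, v \in comp (- g) & b g * v = 1 /\ v * b g = 1) ->
  exists alpha, cocycle alpha /\ exists f, graded_iso alpha comp f.
Proof.
move=> b_comp b_unit; exists (unit_twist b_comp b_unit).
split; [exact: unit_twist_cocycle | exists (unit_basis_map b)].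
exact: unit_basis_map_graded_iso.
Qed.

Section BetaCommutative.
Variable beta : G -> G -> K.
Hypothesis beta_neq0 : forall g h, beta g h != 0.
Hypothesis comp_beta_comm : beta_commutative comp beta.

Lemma mul_alg_swap g h x y (c : K) : x \in comp g -> y \in comp h ->
  x * y = c%:A -> y * x = (c / beta g h)%:A.
Proof.
move=> xg yh; rewrite (comp_beta_comm xg yh) => /(congr1 ( *:%R (beta g h)^-1)).
by rewrite scalerA mulVf // scale1r => ->; rewrite scalerA mulrC.
Qed.

Lemma unit_of_prod_alg (a : G -> A) (r : seq G) (c : K) g :
  (forall h, a h \in comp h) -> \sum_(h <- r) h = 0 ->
  \prod_(h <- r) a h = c%:A -> c != 0 -> g \in r ->
  exists2 v, v \in comp (- g) & a g * v = 1 /\ v * a g = 1.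
Proof.
move=> a_comp + + c_neq0 r_g; case/splitPr: r_g => r1 r2 sum_r.
rewrite big_cat big_cons /=.
set X := \prod_(h <- r1) a h; set Y := \prod_(h <- r2) a h => prod_r.
have X_comp : X \in comp (\sum_(h <- r1) h) by apply: comp_prod.
have Y_comp : Y \in comp (\sum_(h <- r2) h) by apply: comp_prod.
have YX_comp : Y * X \in comp (- g).
  have -> : - g = \sum_(h <- r2) h + \sum_(h <- r1) h.
    by move/eqP: sum_r; rewrite big_cat big_cons /= addrCA addrC addr_eq0 addrC => /eqP ->.
  exact: compM.
set d := c / beta (\sum_(h <- r1) h) (g + \sum_(h <- r2) h).
have agYX : a g * (Y * X) = d%:A.
  by rewrite mulrA; apply: (mul_alg_swap X_comp (compM (a_comp g) Y_comp)).
have YXag : Y * X * a g = (c / beta (\sum_(h <- r1) h + g) (\sum_(h <- r2) h))%:A.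
  by rewrite -mulrA; apply: (mul_alg_swap (compM X_comp (a_comp g)) Y_comp); rewrite -mulrA.
have d_neq0 : d != 0 by rewrite mulf_neq0 ?invr_eq0.
by exists (d^-1 *: (Y * X)); [rewrite compZ | apply: mulr_alg_inverse agYX YXag].
Qed.

Theorem beta_commutative_twisted_group_algebra (s : seq G) (a : G -> A) :
  \sum_(g : G) g = 0 -> uniq s -> (forall g, (g \in s) = (g != 0)) ->
  (forall g, a g \in comp g) -> \prod_(g <- s) a g != 0 ->
  exists alpha, cocycle alpha /\ exists f, graded_iso alpha comp f.
Proof.
move=> sumG0 s_uniq sP a_comp prod_neq0.
have sum_s : \sum_(h <- s) h = 0.
  rewrite big_uniq // (eq_bigl (fun h => h != 0)) => [|h]; last by rewrite /= sP.
  by move: sumG0; rewrite (bigD1 0) //= add0r.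
have /comp0P [c prod_s] : \prod_(h <- s) a h \in comp 0 by rewrite -sum_s comp_prod.
have c_neq0 : c != 0 by apply: contra_neq prod_neq0 => c0; rewrite prod_s c0 scale0r.
apply: (twisted_group_algebra_of_units (b := fun g => if g == 0 then 1 else a g)).
  by move=> g; case: eqP => [->|_]; rewrite ?comp0_1.
move=> g /=; case: eqP => [->|/eqP g_neq0].
  by exists 1; rewrite ?mulr1 // oppr0 comp0_1.
by apply: (unit_of_prod_alg a_comp sum_s prod_s c_neq0); rewrite sP.
Qed.

End BetaCommutative.
End GradedAlgebra.

Theorem corollary4p3 (K : closedFieldType) (hK : [pchar K] =i pred0)
  (n : nat) (hn : (2 <= n)%N)
  (A : algType K) (comp : (ZnZn n) -> {pred A})
  (beta : (ZnZn n) -> (ZnZn n) -> K) :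
  graded_algebra comp ->
  bicharacter beta ->
  beta_commutative comp beta ->
  (forall x : A, x \in comp 0 <-> exists c : K, x = c%:A) ->
  (exists s : seq (ZnZn n),
      [/\ uniq s, (forall g, (g \in s) = (g != 0)) &
          exists a : (ZnZn n) -> A,
            (forall g, a g \in comp g) /\ \prod_(g <- s) a g != 0]) ->
  exists alpha : (ZnZn n) -> (ZnZn n) -> K,
    cocycle alpha /\ exists f : {ffun (ZnZn n) -> K} -> A, graded_iso alpha comp f.
Proof.
move=> comp_graded [beta_neq0 _ _ _] beta_comm comp0P [s [s_uniq sP [a [a_comp prod_neq0]]]].
have sumG0 : \sum_(g : ZnZn n) g = 0 := sumr_pairs 'Z_n.
exact: (beta_commutative_twisted_group_algebra (G := ZnZn n) comp_graded comp0P
          beta_neq0 beta_comm sumG0 s_uniq sP a_comp prod_neq0).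
Qed.
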